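(* Let $S=\{132,231,321\}$, and let $t_n$ and $f_n$ be the numbers of rooted labeled trees and forests on $[n]$ avoiding $S$, with exponential generating functions $T(x)=\sum_{n\ge0}\frac{t_n}{n!}x^n$ and $F(x)=\sum_{n\ge0}\frac{f_n}{n!}x^n$. Then $t_n=n!$ for all $n\ge1$, $T(x)=\frac{x}{1-x}$, $F(x)=e^{x/(1-x)}$, and $\lim_{n\to\infty}\frac{f_n^{1/n}}{n}=e^{-1}$.
   Context: A rooted labeled forest on $[n]$ is an unordered forest on $n$ vertices, each component with a distinguished root, with distinct labels from $[n]$; a rooted labeled tree is a connected one. An instance of a pattern (permutation) $\pi$ of $[k]$ is a sequence of vertices $v_1,\dots,v_k$ with $v_i$ a strict ancestor of $v_{i+1}$ whose labels are in the same relative order as $\pi$; a forest avoids $S$ if it contains no instance of any pattern in $S$. *)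

From mathcomp Require Import all_boot.
Set Implicit Arguments. Unset Strict Implicit. Unset Printing Implicit Defensive.

(* A rooted labeled forest on [n] (labels 0..n-1, order-isomorphic to 1..n) is
   encoded by its parent map: par v = Some w if w is the parent of v,
   par v = None if v is a root.  Such a map encodes a forest iff it is acyclic. *)
Definition parent_map (n : nat) := {ffun 'I_n -> option 'I_n}.

(* [anc par a b] : a is a strict ancestor of b, i.e. a is reached from b by
   following parents k >= 1 times (k <= n suffices). *)
Definition anc (n : nat) (par : parent_map n) (a b : 'I_n) : bool :=
  [exists k : 'I_n.+1, (0 < k) && (iter k (fun o => obind par o) (Some b) == Some a)].

Definition acyclic (n : nat) (par : parent_map n) : bool :=
  [forall v, ~~ anc par v v].

Definition is_forest n (par : parent_map n) : bool := acyclic par.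

Definition is_tree n (par : parent_map n) : bool :=
  acyclic par && (#|[set v | par v == None]| == 1).

Definition contains (n : nat) (par : parent_map n) (pi : seq nat) : bool :=
  [exists vs : (size pi).-tuple 'I_n,
     sorted (anc par) vs &&
     [forall i : 'I_(size pi), forall j : 'I_(size pi),
        (tnth vs i < tnth vs j) == (nth 0 pi i < nth 0 pi j)]].

Definition avoids (n : nat) (par : parent_map n) (S : seq (seq nat)) : bool :=
  all (fun pi => ~~ contains par pi) S.

Definition S0 : seq (seq nat) := [:: [:: 1; 3; 2]; [:: 2; 3; 1]; [:: 3; 2; 1]].

Definition t_S (n : nat) : nat := #|[set par : parent_map n | is_tree par && avoids par S0]|.
Definition f_S (n : nat) : nat := #|[set par : parent_map n | is_forest par && avoids par S0]|.

(* The patterns 132, 231 and 321 are exactly the patterns of length three whose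
   last entry is smaller than the middle one, so an acyclic parent map avoids them
   iff every vertex whose parent is not a root is larger than its parent.  Given
   the set of k roots, let the n - k other vertices choose their parents in
   increasing order: the i-th of them (counting from 0) may pick any root or any
   of the i smaller non-roots, so there are k (k+1) ... (n-1) such forests.  Hence
   f_n = sum_k C(n,k) k (k+1) ... (n-1) is a sum of Lah numbers, t_n = n!, and
   f_(m+1) / (m+1)! = sum_j C(m,j) / (j+1)!.  Summing the absolutely convergent
   array C(m,j) x^(m+1) / (j+1)! column by column, with
   sum_m C(m,j) x^(m+1) = (x/(1-x))^(j+1), gives F(x) = exp (x/(1-x)).  Finally
   1 <= f_n / n! <= exp (2 sqrt n) and n ln n - n <= ln n! <= (n+1) ln n - n + 1,
   so ln f_n / n - ln n tends to -1. *)

From mathcomp Require Import all_boot zify.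
From Stdlib Require Import Reals Lra Lia.
From Coquelicot Require Import Coquelicot.
Set Implicit Arguments. Unset Strict Implicit. Unset Printing Implicit Defensive.

Open Scope nat_scope.

Section AvoidingForests.
Variable n : nat.
Implicit Types (par : parent_map n) (a b c u v w : 'I_n).

Definition increasing_below_roots par : bool :=
  [forall v, forall w, (par v == Some w) ==> (par w == None) || (w < v)].

Lemma iter_obind_None par k : iter k (fun o => obind par o) None = None.
Proof. by elim: k => //= k ->. Qed.

Lemma anc_has_parent par a b : anc par a b -> par b != None.
Proof.
case/existsP=> -[[|k] ?] //; rewrite iterSr /= => /eqP.
by case: (par b) => //; rewrite iter_obind_None.
Qed.

Lemma anc_parent par a b : par b = Some a -> anc par a b.
Proof.
move=> pb; apply/existsP; exists (inord 1).
by rewrite inordK ?ltnS ?(leq_ltn_trans _ (ltn_ord b)) //= pb.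
Qed.

Lemma anc_grandparent par a b c : b != c -> par c = Some b -> par b = Some a -> anc par a c.
Proof.
move=> bc pc pb; apply/existsP; exists (inord 2).
have n_gt1 : 1 < n by move: bc (ltn_ord b) (ltn_ord c); rewrite -val_eqE /=; lia.
by rewrite inordK ?ltnS //= pc /= pb.
Qed.

Section Increasing.
Variable par : parent_map n.
Hypothesis incr : increasing_below_roots par.

Lemma iter_parent_lt k a b : 0 < k -> iter k (fun o => obind par o) (Some b) = Some a ->
  par a != None -> a < b.
Proof.
elim: k a => // k IHk a _; rewrite iterS.
case Ec: (iter k _ (Some b)) => [c|] //= pc pa.
have /orP[/eqP pa0 | ac] := implyP (forallP (forallP incr c) a) (introT eqP pc).
  by rewrite pa0 in pa.
case: k IHk Ec => [|k] IHk Ec; first by move: Ec ac => /= [->].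
by rewrite (ltn_trans ac) // IHk // pc.
Qed.

Lemma anc_lt a b : anc par a b -> par a != None -> a < b.
Proof. by case/existsP=> k /andP[k_gt0 /eqP]; apply: iter_parent_lt. Qed.

Lemma increasing_below_roots_acyclic : acyclic par.
Proof.
apply/forallP=> v; apply/negP=> vv.
by have := anc_lt vv (anc_has_parent vv); rewrite ltnn.
Qed.

Lemma increasing_below_roots_not_contains i j k : k < j -> ~~ contains par [:: i; j; k].
Proof.
move=> kj; apply/negP=> /existsP[[[|x [|y [|z [|]]]] //= ?]].
case/andP=> /and3P[xy yz _] /forallP/(_ (inord 2))/forallP/(_ (inord 1)).
rewrite !(tnth_nth x) !inordK //= kj => /eqP zy.
by have := anc_lt yz (anc_has_parent xy); lia.
Qed.

Lemma increasing_below_roots_avoids : avoids par S0.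
Proof. by rewrite /avoids /= !increasing_below_roots_not_contains. Qed.

End Increasing.

Lemma contains_parent_chain par i j k u w v : par w = Some u -> par v = Some w ->
  (u < w) = (i < j) -> (w < u) = (j < i) -> (u < v) = (i < k) ->
  (v < u) = (k < i) -> (w < v) = (j < k) -> (v < w) = (k < j) ->
  contains par [:: i; j; k].
Proof.
move=> pw pv e1 e2 e3 e4 e5 e6; apply/existsP; exists [tuple u; w; v].
rewrite /= (anc_parent pw) (anc_parent pv) /=.
apply/forallP=> -[[|[|[|p]]] Hp] //; apply/forallP=> -[[|[|[|q]]] Hq] //;
  by rewrite !(tnth_nth u) /= ?ltnn ?e1 ?e2 ?e3 ?e4 ?e5 ?e6.
Qed.

Lemma avoids_increasing_below_roots par :
  acyclic par -> avoids par S0 -> increasing_below_roots par.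
Proof.
move=> /forallP acyc /and4P[no132 no231 no321 _].
apply/forallP=> v; apply/forallP=> w; apply/implyP=> /eqP pv.
case pw: (par w) => [u|] //=; rewrite ltnNge; apply/negP=> vw.
have [wv|wv] := eqVneq w v.
  by move: pv; rewrite wv => /anc_parent; exact/negP/acyc.
have [uw|uw] := eqVneq u w.
  by move: pw; rewrite uw => /anc_parent; exact/negP/acyc.
have [uv|uv] := eqVneq u v.
  by move: (anc_grandparent wv pv pw); rewrite uv; exact/negP/acyc.
move: wv uw uv; rewrite -!val_eqE /= => wv uw uv.
have [ltuv|levu] := ltnP u v.
  by move/negP: no132; apply; apply: (contains_parent_chain pw pv); lia.
have [ltuw|lewu] := ltnP u w.
  by move/negP: no231; apply; apply: (contains_parent_chain pw pv); lia.
by move/negP: no321; apply; apply: (contains_parent_chain pw pv); lia.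
Qed.

Lemma forest_avoids_S0E par : is_forest par && avoids par S0 = increasing_below_roots par.
Proof.
apply/andP/idP=> [[]|incr]; first exact: avoids_increasing_below_roots.
by split; [apply: increasing_below_roots_acyclic | apply: increasing_below_roots_avoids].
Qed.

End AvoidingForests.

Definition rising k d := \prod_(0 <= i < d) (k + i).

Lemma rising_fact k d : rising k.+1 d * k`! = (k + d)`!.
Proof.
elim: d => [|d IHd]; first by rewrite /rising big_geq // mul1n addn0.
by rewrite /rising big_nat_recr //= mulnAC IHd addnS factS mulnC addSn.
Qed.

Lemma prod_rising (A : pred nat) k m :
  \prod_(0 <= v < m | A v) (k + \sum_(0 <= w < v | A w) 1) =
  rising k (\sum_(0 <= v < m | A v) 1).
Proof.
elim: m => [|m IHm]; first by rewrite /rising !big_geq.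
rewrite big_mkcond big_nat_recr //= -big_mkcond IHm.
rewrite [in RHS]big_mkcond big_nat_recr //= -[in RHS]big_mkcond /=.
by case: (A m); rewrite ?muln1 ?addn0 // /rising addn1 big_nat_recr.
Qed.

Lemma sum_set_by_card (T : finType) (P : pred nat) (F : nat -> nat) :
  \sum_(A : {set T} | P #|A|) F #|A| = \sum_(k < #|T|.+1 | P k) 'C(#|T|, k) * F k.
Proof.
have card_le (A : {set T}) : #|A| < #|T|.+1 by rewrite ltnS max_card.
pose size_of (A : {set T}) : 'I_#|T|.+1 := inord #|A|.
rewrite (partition_big size_of [pred k : 'I_#|T|.+1 | P k]);
  last by move=> A PA; rewrite inE inordK.
apply: eq_bigr => k Pk; rewrite -card_draws -sum_nat_const.
apply: eq_big => [A|A /andP[_ /eqP <-]]; last by rewrite inordK.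
rewrite inE -(inj_eq val_inj) /= inordK //.
by case: (#|A| =P k) => [->|]; rewrite ?andbT ?andbF.
Qed.

Definition Lah n k := 'C(n, k) * rising k (n - k).

Lemma Lah_succ_fact m j : j <= m -> Lah m.+1 j.+1 * j.+1`! = m.+1`! * 'C(m, j).
Proof.
move=> jm; apply/eqP; rewrite /Lah subSS.
have facts_gt0 : 0 < j`! * (m - j)`! by rewrite muln_gt0 !fact_gt0.
rewrite -(eqn_pmul2r facts_gt0) -[m.+1`! * _ * _]mulnA bin_fact //.
have regroup x y z u v : x * y * z * (u * v) = x * (z * v) * (y * u) by nia.
by rewrite regroup rising_fact subnKC // -[(m - j)`!]/((m.+1 - j.+1)`!) bin_fact.
Qed.

Section Counting.
Variable n : nat.
Implicit Types (par : parent_map n) (R : {set 'I_n}).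

Definition roots par : {set 'I_n} := [set v | par v == None].

Definition parent_choices R (v : 'I_n) : {set option 'I_n} :=
  if v \in R then [set None] else Some @: [set w | (w \in R) || (w < v)].

Lemma family_parent_choices R par :
  (par \in finfun.family (fun v => mem (parent_choices R v))) =
  increasing_below_roots par && (roots par == R).
Proof.
apply/familyP/andP=> [choice | [/forallP incr /eqP <-] v].
  have rootsR : roots par = R.
    apply/setP=> v; rewrite inE; have := choice v; rewrite /parent_choices.
    by case: (v \in R) => [/set1P -> | /imsetP[w _ ->]].
  split; last by rewrite rootsR.
  apply/forallP=> v; apply/forallP=> w; apply/implyP=> /eqP pv.
  have := choice v; rewrite /parent_choices pv; case: ifP => [_ /set1P // | _].
by rewrite (mem_imset _ _ Some_inj) inE -rootsR inE.
rewrite /parent_choices /roots in_set; case pv: (par v) => [w|] /=; last exact: set11.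
rewrite (mem_imset _ _ Some_inj) !inE.
exact: implyP (forallP (incr v) w) (introT eqP pv).
Qed.

Lemma card_increasing_below_roots_with_roots R :
  #|[set par | increasing_below_roots par && (roots par == R)]| = rising #|R| (n - #|R|).
Proof.
rewrite (eq_card (B := finfun.family (fun v => mem (parent_choices R v)))); last first.
  by move=> par; rewrite inE family_parent_choices.
rewrite card_family foldrE big_map big_enum /=.
pose nonroot k := if insub k is Some w then (w : 'I_n) \notin R else false.
have nonrootE (w : 'I_n) : nonroot w = (w \notin R) by rewrite /nonroot valK.
have card_choices (v : 'I_n) : #|parent_choices R v| =
    if v \notin R then #|R| + \sum_(0 <= w < v | nonroot w) 1 else 1.
  rewrite /parent_choices; case: (v \in R); first by rewrite cards1.
  rewrite card_imset; last by move=> x y [].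
  rewrite -(cardsID R); congr (_ + _).
    by rewrite (setIidPr _) //; apply/subsetP=> w; rewrite inE => ->.
  rewrite -sum1_card (big_nat_widen _ _ _ _ _ (ltnW (ltn_ord v))) big_mkord.
  by apply: eq_bigl => w; rewrite !inE nonrootE; case: (w \in R); rewrite ?andbF.
rewrite (eq_bigr _ (fun v _ => card_choices v)) -big_mkcondr /=.
have -> : n - #|R| = \sum_(0 <= v < n | nonroot v) 1.
  rewrite big_mkord -{1}(card_ord n) -(cardsC R) addKn -sum1_card.
  by apply: eq_bigl => w; rewrite !inE nonrootE.
by rewrite -prod_rising big_mkord; apply: eq_big => [v|v _]; rewrite ?nonrootE.
Qed.

Lemma card_increasing_below_roots (P : pred nat) :
  #|[set par | increasing_below_roots par && P #|roots par|]| =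
  \sum_(k < n.+1 | P k) Lah n k.
Proof.
rewrite -sum1_card (partition_big roots (fun R => P #|R|)) /=; last first.
  by move=> par; rewrite inE => /andP[].
have := sum_set_by_card 'I_n P (fun k => rising k (n - k)); rewrite card_ord => <-.
apply: eq_bigr => R PR; rewrite -card_increasing_below_roots_with_roots -sum1_card.
apply: eq_bigl => par; rewrite !inE.
by case: eqP => [->|]; rewrite ?PR ?andbT ?andbF.
Qed.

End Counting.

Lemma f_S_Lah n : f_S n = \sum_(k < n.+1) Lah n k.
Proof.
rewrite /f_S -(card_increasing_below_roots n predT).
by apply: eq_card => par; rewrite !inE forest_avoids_S0E andbT.
Qed.

Lemma t_S_Lah n : t_S n = \sum_(k < n.+1 | k == 1 :> nat) Lah n k.
Proof.
rewrite /t_S -(card_increasing_below_roots n (pred1 1)).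
by apply: eq_card => par; rewrite !inE /is_tree andbAC forest_avoids_S0E.
Qed.

Lemma t_S_fact n : 0 < n -> t_S n = n`!.
Proof.
case: n => // n _; rewrite t_S_Lah (big_pred1 (inord 1)) => [|k]; last first.
  by rewrite /= -val_eqE /= inordK.
by rewrite inordK // /Lah bin1 subSS subn0 -[rising 1 n]muln1 rising_fact factS.
Qed.

Lemma t_S0 : t_S 0 = 0.
Proof. by rewrite t_S_Lah big_mkcond big_ord1. Qed.

Lemma hockey_stick m j : \sum_(k < m.+1) 'C(k, j) = 'C(m.+1, j.+1).
Proof.
elim: m => [|m IHm]; first by rewrite big_ord1; case: j.
by rewrite big_ord_recr /= IHm [in RHS]binS.
Qed.

Lemma bin_fact_le_expn m j : 'C(m, j) * j`! <= expn m j.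
Proof.
rewrite bin_ffact ffact_prod -[j in expn m j]card_ord -prod_nat_const.
by apply: leq_prod => i _; apply: leq_subr.
Qed.

Open Scope R_scope.

Lemma sum_n_nonneg (a : nat -> R) N : (forall n, 0 <= a n) -> 0 <= sum_n a N.
Proof.
move=> a_ge0; elim: N => [|N IHN]; first by rewrite sum_O.
by rewrite sum_Sn; apply: Rplus_le_le_0_compat.
Qed.

Lemma sum_n_ge_first (a : nat -> R) m : (forall n, 0 <= a n) -> a 0%nat <= sum_n a m.
Proof.
move=> a_ge0; elim: m => [|m IHm]; first by rewrite sum_O; lra.
by rewrite sum_Sn /plus /=; have := a_ge0 m.+1; lra.
Qed.

Lemma sum_n_sqr_le (u : nat -> R) m :
  (forall n, 0 <= u n) -> sum_n (fun n => u n ^ 2) m <= sum_n u m ^ 2.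
Proof.
move=> u_ge0; elim: m => [|m IHm]; first by rewrite !sum_O; lra.
rewrite !sum_Sn /plus /=; have := sum_n_nonneg m u_ge0; have := u_ge0 m.+1.
by move: IHm; set s2 := sum_n _ m; set s := sum_n u m; nra.
Qed.

Lemma sum_n_Rabs (a : nat -> R) N : Rabs (sum_n a N) <= sum_n (fun n => Rabs (a n)) N.
Proof. exact: (norm_sum_n_m a 0 N). Qed.

Lemma sum_n_trailing_zeros (a : nat -> R) m M :
  (m <= M)%coq_nat -> (forall j, (m < j)%coq_nat -> a j = 0) -> sum_n a M = sum_n a m.
Proof.
move=> mM a0; elim: M mM => [|M IHM] mM; first by have -> : m = 0%nat by lia.
have [->|mM'] := Nat.eq_dec m M.+1; first by [].
by rewrite sum_Sn a0 ?IHM /plus /= ?Rplus_0_r //; lia.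
Qed.

Lemma is_series_partial_le (a : nat -> R) l N :
  (forall n, 0 <= a n) -> is_series a l -> sum_n a N <= l.
Proof.
move=> a_ge0 al; have partial_lim : is_lim_seq (sum_n a) l := al.
apply: (is_lim_seq_le_loc _ _ _ _ _ (is_lim_seq_const (sum_n a N)) partial_lim).
exists N => M NM; rewrite -(Nat.sub_add N M NM).
elim: (M - N)%coq_nat => [|k IHk] /=; first lra.
by rewrite sum_Sn /plus /=; have := a_ge0 (S (k + N)%coq_nat); lra.
Qed.

Lemma is_lim_seq_sum_n_null (u : nat -> nat -> R) K :
  (forall j, is_lim_seq (u j) 0) -> is_lim_seq (fun M => sum_n (fun j => u j M) K) 0.
Proof.
move=> u_null; elim: K => [|K IHK].
  by apply: is_lim_seq_ext (u_null 0%nat) => M; rewrite sum_O.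
rewrite -[0]Rplus_0_l; apply: is_lim_seq_ext (is_lim_seq_plus' _ _ _ _ IHK (u_null K.+1)).
by move=> M; rewrite sum_Sn.
Qed.

Lemma tannery_null (u : nat -> nat -> R) (b : nat -> R) :
  (forall j, is_lim_seq (u j) 0) -> (forall j M, Rabs (u j M) <= b j) -> ex_series b ->
  is_lim_seq (fun M => sum_n (fun j => u j M) M) 0.
Proof.
move=> u_null u_le b_sum; apply/is_lim_seq_spec => eps.
have eps2 : 0 < eps / 2 by have := cond_pos eps; lra.
have [N b_tail] := Cauchy_ex_series b b_sum (mkposreal _ eps2).
have /is_lim_seq_spec /(_ (mkposreal _ eps2)) [M0 head_small] :=
  is_lim_seq_sum_n_null N u_null.
exists (max N.+1 M0) => M NM; rewrite Rminus_0_r.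
have N_M : (N <= M)%coq_nat by lia.
rewrite /sum_n (sum_n_m_Chasles _ _ _ _ (Nat.le_0_l N.+1) N_M) /plus /=.
have tail_le : Rabs (sum_n_m (fun j => u j M) N.+1 M) <= sum_n_m b N.+1 M.
  apply: Rle_trans (norm_sum_n_m (fun j => u j M) N.+1 M) _.
  by apply: sum_n_m_le => j; apply: u_le.
have head_lt := head_small M ltac:(lia); have btail_lt := b_tail N.+1 M ltac:(lia) N_M.
move: tail_le head_lt btail_lt (Rle_abs (sum_n_m b N.+1 M)).
move: (Rabs_triang (sum_n_m (fun j => u j M) 0 N) (sum_n_m (fun j => u j M) N.+1 M)).
rewrite /norm /= /abs /= Rminus_0_r /sum_n.
set head := sum_n_m (fun j => u j M) 0 N; set tail := sum_n_m (fun j => u j M) N.+1 M.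
set btail := sum_n_m b N.+1 M.
lra.
Qed.

Lemma is_series_triangular (c : nat -> nat -> R) (r b : nat -> R) (L : R) :
  (forall m j, (m < j)%coq_nat -> c m j = 0) ->
  (forall j, is_series (fun m => c m j) (r j)) ->
  (forall j, is_series (fun m => Rabs (c m j)) (b j)) ->
  ex_series b -> is_series r L ->
  is_series (fun m => sum_n (c m) m) L.
Proof.
move=> c_triangular column_sum column_abs_sum b_summable r_sum.
have rows_to_columns M :
    sum_n (fun m => sum_n (c m) m) M = sum_n (fun j => sum_n (fun m => c m j) M) M.
  rewrite -sum_n_switch; apply: sum_n_ext_loc => m mM.
  by rewrite (sum_n_trailing_zeros mM) // => j; apply: c_triangular.
have partial_le j M : Rabs (sum_n (fun m => c m j) M) <= b j.
  apply: Rle_trans (sum_n_Rabs _ _) _.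
  by apply: (is_series_partial_le _ _ (column_abs_sum j)) => m; apply: Rabs_pos.
have r_le j : Rabs (r j) <= b j.
  rewrite -(is_series_unique _ _ (column_sum j)) -(is_series_unique _ _ (column_abs_sum j)).
  by apply: Series_Rabs; exists (b j).
have error_null :
    is_lim_seq (fun M => sum_n (fun j => sum_n (fun m => c m j) M - r j) M) 0.
  apply: (@tannery_null _ (fun j => 2 * b j)).
  - move=> j; rewrite -(Rminus_diag (r j)).
    exact: is_lim_seq_minus' (column_sum j) (is_lim_seq_const _).
  - move=> j M; have := Rabs_triang (sum_n (fun m => c m j) M) (- r j).
    by rewrite Rabs_Ropp /Rminus; have := partial_le j M; have := r_le j; lra.
  - exact: (ex_series_scal_l 2 b b_summable).
rewrite -[L]Rplus_0_l.
apply: is_lim_seq_ext (is_lim_seq_plus' _ _ _ _ error_null r_sum) => M.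
have := sum_n_plus (fun j => sum_n (fun m => c m j) M - r j) r M.
rewrite rows_to_columns /plus /= => <-.
by apply: sum_n_ext => j; rewrite /plus /=; ring.
Qed.

Lemma INR_sum_ord m (F : nat -> nat) :
  INR (\sum_(j < m.+1) F j) = sum_n (fun j => INR (F j)) m.
Proof.
elim: m => [|m IHm]; first by rewrite big_ord1 sum_O.
by rewrite big_ord_recr /= plus_INR IHm sum_Sn.
Qed.

Lemma INR_expn m j : INR (expn m j) = INR m ^ j.
Proof. by elim: j => // j IHj; rewrite expnS mult_INR IHj. Qed.

Lemma fact_Factorial n : n`! = Factorial.fact n.
Proof. by elim: n => // n IHn; rewrite factS IHn. Qed.

Lemma INR_fact_gt0 n : 0 < INR n`!.
Proof. by apply: lt_0_INR; apply/ltP; rewrite fact_gt0. Qed.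

Lemma is_series_binomial_column j x : Rabs x < 1 ->
  is_series (fun m => INR 'C(m, j) * x ^ m) (x ^ j / (1 - x) ^ j.+1).
Proof.
elim: j x => [|j IHj] x x_lt1; have x_ne1 : 1 - x <> 0 by have := Rabs_def2 _ _ x_lt1; lra.
  have -> : x ^ 0 / (1 - x) ^ 1 = / (1 - x) by rewrite /=; field.
  by apply: (is_series_ext _ _ _ _ (is_series_geom x x_lt1)) => m; rewrite bin0 Rmult_1_l.
have absx_lt1 : Rabs (Rabs x) < 1 by rewrite Rabs_Rabsolu.
have column_abs : ex_series (fun m => Rabs (INR 'C(m, j) * x ^ m)).
  exists (Rabs x ^ j / (1 - Rabs x) ^ j.+1).
  apply: (is_series_ext _ _ _ _ (IHj _ absx_lt1)) => m.
  by rewrite Rabs_mult RPow_abs (Rabs_pos_eq (INR _)) //; apply: pos_INR.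
have geom_abs : ex_series (fun m => Rabs (x ^ m)).
  exists (/ (1 - Rabs x)); apply: (is_series_ext _ _ _ _ (is_series_geom _ absx_lt1)) => m.
  by rewrite RPow_abs.
have shifted : is_series (fun m => INR 'C(m.+1, j.+1) * x ^ m)
    (x ^ j / (1 - x) ^ j.+1 * / (1 - x)).
  apply: (is_series_ext _ _ _ _ (is_series_mult _ _ _ _ (IHj x x_lt1)
    (is_series_geom x x_lt1) column_abs geom_abs)) => m.
  rewrite -hockey_stick (INR_sum_ord m (fun k => 'C(k, j))) sum_n_Reals Rmult_comm scal_sum.
  apply: sum_eq => k km; rewrite Rmult_assoc -pow_add; congr (_ * x ^ _); lia.
apply: is_series_decr_1; rewrite bin0n Rmult_0_l /opp /plus /= Ropp_0 Rplus_0_r.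
have -> : x * x ^ j / ((1 - x) * ((1 - x) * (1 - x) ^ j)) =
    scal x (x ^ j / (1 - x) ^ j.+1 * / (1 - x)).
  by rewrite /scal /= /mult /=; field; split => //; apply: pow_nonzero.
apply: (is_series_ext _ _ _ _ (is_series_scal_l x _ _ shifted)) => m.
by rewrite /scal /= /mult /=; ring.
Qed.

Lemma is_series_binomial_column_scaled j z : Rabs z < 1 ->
  is_series (fun m => INR 'C(m, j) / INR j.+1`! * z ^ m.+1) ((z / (1 - z)) ^ j.+1 / INR j.+1`!).
Proof.
move=> z_lt1; have z_ne1 : 1 - z <> 0 by have := Rabs_def2 _ _ z_lt1; lra.
have fact_gt0 := INR_fact_gt0 j.+1.
have -> : (z / (1 - z)) ^ j.+1 / INR j.+1`! =
    scal (z / INR j.+1`!) (z ^ j / (1 - z) ^ j.+1).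
  rewrite /scal /= /mult /= Rpow_mult_distr pow_inv.
  by field; split; [apply: pow_nonzero | lra].
have := is_series_scal_l (z / INR j.+1`!) _ _ (@is_series_binomial_column j z z_lt1).
apply: is_series_ext => m; rewrite /scal /= /mult /=; field; lra.
Qed.

Lemma is_series_exp_sub1 y : is_series (fun j => y ^ j.+1 / INR j.+1`!) (exp y - 1).
Proof.
apply: (is_series_incr_1 (fun j => y ^ j / INR j`!)).
have -> : plus (exp y - 1) (y ^ 0 / INR 0`!) = exp y by rewrite /plus /=; field.
apply: (is_series_ext _ _ _ _ (is_exp_Reals y)) => j.
by rewrite /scal /= /mult /= pow_n_pow fact_Factorial.
Qed.

Lemma ln_le_sub1 y : 0 < y -> ln y <= y - 1.
Proof. by move=> y_gt0; have := exp_ineq1_le (ln y); rewrite exp_ln //; lra. Qed.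

Lemma ln_le_2sqrt y : 0 < y -> ln y <= 2 * sqrt y.
Proof.
move=> y_gt0; have sqrt_gt0 := sqrt_lt_R0 _ y_gt0.
rewrite -{1}(sqrt_sqrt y) ?ln_mult; try lra.
by have := ln_le_sub1 sqrt_gt0; lra.
Qed.

Lemma ln_succ_sub_bounds x : 0 < x -> / (x + 1) <= ln (x + 1) - ln x <= / x.
Proof.
move=> x_gt0; have ln_div a b : 0 < a -> 0 < b -> ln a - ln b = ln (a / b).
  by move=> a_gt0 b_gt0; rewrite ln_mult ?ln_Rinv //; apply: Rinv_0_lt_compat.
rewrite ln_div; try lra; split.
  rewrite -[ln _]Ropp_involutive -ln_Rinv; last by apply: Rdiv_lt_0_compat; lra.
  have := ln_le_sub1 (Rinv_0_lt_compat _ (Rdiv_lt_0_compat (x + 1) x ltac:(lra) x_gt0)).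
  have -> : / ((x + 1) / x) - 1 = - / (x + 1) by field; lra.
  lra.
have := ln_le_sub1 (Rdiv_lt_0_compat (x + 1) x ltac:(lra) x_gt0).
have -> : (x + 1) / x - 1 = / x by field; lra.
lra.
Qed.

Lemma ln_INR_fact_succ m : ln (INR m.+2`!) = ln (INR m.+1 + 1) + ln (INR m.+1`!).
Proof.
rewrite factS mult_INR -S_INR ln_mult //; last exact: INR_fact_gt0.
by apply: lt_0_INR; lia.
Qed.

Lemma ln_fact_lower m : INR m.+1 * ln (INR m.+1) - INR m.+1 <= ln (INR m.+1`!).
Proof.
elim: m => [|m IHm]; first by rewrite /= ln_1; lra.
rewrite ln_INR_fact_succ [INR m.+2]S_INR.
have N_gt0 : 0 < INR m.+1 by apply: lt_0_INR; lia.
have [_ ln_step] := ln_succ_sub_bounds N_gt0.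
have : INR m.+1 * (ln (INR m.+1 + 1) - ln (INR m.+1)) <= 1.
  apply: (Rle_trans _ _ _ (Rmult_le_compat_l _ _ _ (Rlt_le _ _ N_gt0) ln_step)).
  by right; field; lra.
lra.
Qed.

Lemma ln_fact_upper m :
  ln (INR m.+1`!) <= (INR m.+1 + 1) * ln (INR m.+1) - INR m.+1 + 1.
Proof.
elim: m => [|m IHm]; first by rewrite /= ln_1; lra.
rewrite ln_INR_fact_succ [INR m.+2]S_INR.
have N_gt0 : 0 < INR m.+1 by apply: lt_0_INR; lia.
have [ln_step _] := ln_succ_sub_bounds N_gt0.
have : 1 <= (INR m.+1 + 1) * (ln (INR m.+1 + 1) - ln (INR m.+1)).
  apply: (Rle_trans _ _ _ _ (Rmult_le_compat_l (INR m.+1 + 1) _ _ ltac:(lra) ln_step)).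
  by right; field; lra.
lra.
Qed.

(* Sequences indexed by m stand for n = m + 1, which keeps the junk values ln 0
   and / 0 out of the way. *)
Lemma is_lim_seq_inv_succ : is_lim_seq (fun m => / INR m.+1) 0.
Proof.
apply/(is_lim_seq_incr_1 (fun m => / INR m)).
by apply: (is_lim_seq_inv _ p_infty is_lim_seq_INR).
Qed.

Lemma is_lim_seq_inv_sqrt : is_lim_seq (fun m => / sqrt (INR m.+1)) 0.
Proof.
rewrite -sqrt_0.
apply: is_lim_seq_ext (is_lim_seq_continuous _ _ _ _ is_lim_seq_inv_succ) => [m|].
  by rewrite sqrt_inv.
by apply: continuity_pt_sqrt; lra.
Qed.

Lemma is_lim_seq_sqrt_bounded_div (u : nat -> R) :
  (forall m, 0 <= u m <= 2 * sqrt (INR m.+1)) -> is_lim_seq (fun m => u m / INR m.+1) 0.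
Proof.
move=> u_bounds.
apply: (is_lim_seq_le_le (fun _ => 0) _ (fun m => 2 * / sqrt (INR m.+1))).
- move=> m; have [u_ge0 u_le] := u_bounds m.
  have N_gt0 : 0 < INR m.+1 by apply: lt_0_INR; lia.
  have sqrt_gt0 : 0 < sqrt (INR m.+1) by apply: sqrt_lt_R0.
  split; first exact: Rdiv_le_0_compat.
  apply: (Rle_trans _ (2 * sqrt (INR m.+1) / INR m.+1)).
    by apply: Rmult_le_compat_r u_le; apply: Rlt_le; apply: Rinv_0_lt_compat.
  by right; rewrite -{2}(sqrt_sqrt (INR m.+1)); [field | ]; lra.
- exact: is_lim_seq_const.
- by rewrite -(Rmult_0_r 2); apply: is_lim_seq_scal_l is_lim_seq_inv_sqrt.
Qed.

Lemma is_lim_seq_ln_div : is_lim_seq (fun m => ln (INR m.+1) / INR m.+1) 0.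
Proof.
apply: is_lim_seq_sqrt_bounded_div => m.
have N_ge1 : 1 <= INR m.+1 by rewrite S_INR; have := pos_INR m; lra.
by split; [rewrite -ln_1; apply: ln_le | apply: ln_le_2sqrt]; lra.
Qed.

Lemma is_lim_seq_ln_fact :
  is_lim_seq (fun m => ln (INR m.+1`!) / INR m.+1 - ln (INR m.+1)) (-1).
Proof.
apply: (is_lim_seq_le_le (fun _ => -1) _
  (fun m => -1 + (ln (INR m.+1) / INR m.+1 + / INR m.+1))).
- move=> m; have := ln_fact_lower m; have := ln_fact_upper m.
  set N := INR m.+1; set lnN := ln N; set lnF := ln (INR m.+1`!) => upper lower.
  have N_gt0 : 0 < N by apply: lt_0_INR; lia.
  have N_inv_ge0 : 0 <= / N by apply: Rlt_le; apply: Rinv_0_lt_compat.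
  split.
    apply: (Rle_trans _ ((N * lnN - N) / N - lnN)); first by right; field; lra.
    by apply: Rplus_le_compat_r; apply: Rmult_le_compat_r lower.
  apply: (Rle_trans _ (((N + 1) * lnN - N + 1) / N - lnN)); last by right; field; lra.
  by apply: Rplus_le_compat_r; apply: Rmult_le_compat_r upper.
- exact: is_lim_seq_const.
- have -> : Rbar.Finite (-1) = Rbar.Finite (-1 + (0 + 0)) by congr Rbar.Finite; ring.
  apply: is_lim_seq_plus'; first exact: is_lim_seq_const.
  exact: is_lim_seq_plus' is_lim_seq_ln_div is_lim_seq_inv_succ.
Qed.

Lemma bin_div_fact_succ_le_sqr m j :
  INR 'C(m, j) / INR j.+1`! <= (sqrt (INR m.+1) ^ j / INR j`!) ^ 2.
Proof.
have fj_gt0 := INR_fact_gt0 j.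
have fact_le : INR j`! <= INR j.+1`! by apply: le_INR; apply/leP; rewrite factS leq_pmull.
have bin_le : INR 'C(m, j) * INR j`! <= INR m.+1 ^ j.
  apply: (Rle_trans _ (INR m ^ j)).
    by rewrite -mult_INR -INR_expn; apply: le_INR; apply/leP; apply: bin_fact_le_expn.
  by apply: pow_incr; split; [apply: pos_INR | apply: le_INR; lia].
have -> : (sqrt (INR m.+1) ^ j / INR j`!) ^ 2 = INR m.+1 ^ j / INR j`! ^ 2.
  rewrite Rpow_mult_distr -pow_mult Nat.mul_comm pow_mult pow2_sqrt ?pow_inv //.
  exact: pos_INR.
apply: (Rle_trans _ (INR 'C(m, j) / INR j`!)).
  apply: Rmult_le_compat_l; first exact: pos_INR.
  exact: Rinv_le_contravar.
apply: (Rle_trans _ (INR 'C(m, j) * INR j`! / INR j`! ^ 2)); first by right; field; lra.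
apply: Rmult_le_compat_r bin_le.
by apply: Rlt_le; apply: Rinv_0_lt_compat; apply: pow_lt.
Qed.

Lemma t_S_egf x : -1 < x < 1 ->
  is_series (fun n => INR (t_S n) / INR n`! * x ^ n) (x / (1 - x)).
Proof.
move=> x_bounds; have x_lt1 : Rabs x < 1 by apply: Rabs_def1; lra.
apply: is_series_decr_1; rewrite t_S0 /plus /opp /= Rdiv_0_l Rmult_0_l Ropp_0 Rplus_0_r.
have -> : x / (1 - x) = scal x (/ (1 - x)) by rewrite /scal /= /mult /=.
apply: (is_series_ext _ _ _ _ (is_series_scal_l x _ _ (is_series_geom x x_lt1))) => n.
have fact_gt0 := INR_fact_gt0 n.+1.
by rewrite t_S_fact // /scal /= /mult /=; field; lra.
Qed.

Definition f_S_coef n := INR (f_S n) / INR n`!.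

Lemma f_S_coef0 : f_S_coef 0 = 1.
Proof. by rewrite /f_S_coef f_S_Lah big_ord1 /Lah /rising big_geq //= Rdiv_1_r. Qed.

Lemma f_S_coef_succ m : f_S_coef m.+1 = sum_n (fun j => INR 'C(m, j) / INR j.+1`!) m.
Proof.
rewrite /f_S_coef f_S_Lah big_ord_recl {1}/Lah /rising big_nat_recl //= muln0 add0n.
rewrite (INR_sum_ord m (fun j => Lah m.+1 j.+1)).
have := sum_n_mult_r (/ INR m.+1`!) (fun j => INR (Lah m.+1 j.+1)) m.
rewrite /mult /= /Rdiv => <-; apply: sum_n_ext_loc => j /leP jm.
have Lah_eq : INR (Lah m.+1 j.+1) * INR j.+1`! = INR m.+1`! * INR 'C(m, j).
  by rewrite -!mult_INR !multE Lah_succ_fact.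
have fm_gt0 := INR_fact_gt0 m.+1; have fj_gt0 := INR_fact_gt0 j.+1.
have -> : INR (Lah m.+1 j.+1) * / INR m.+1`! =
    INR (Lah m.+1 j.+1) * INR j.+1`! / (INR m.+1`! * INR j.+1`!) by field; lra.
by rewrite Lah_eq /=; field; lra.
Qed.

Theorem f_S_egf x : -1 < x < 1 ->
  is_series (fun n => INR (f_S n) / INR n`! * x ^ n) (exp (x / (1 - x))).
Proof.
move=> x_bounds; have x_lt1 : Rabs x < 1 by apply: Rabs_def1; lra.
have absx_lt1 : Rabs (Rabs x) < 1 by rewrite Rabs_Rabsolu.
pose c m j := INR 'C(m, j) / INR j.+1`! * x ^ m.+1.
have c_triangular m j : (m < j)%coq_nat -> c m j = 0.
  by move=> /ltP mj; rewrite /c bin_small // /Rdiv !Rmult_0_l.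
have columns j := @is_series_binomial_column_scaled j x x_lt1.
have abs_columns j : is_series (fun m => Rabs (c m j))
    ((Rabs x / (1 - Rabs x)) ^ j.+1 / INR j.+1`!).
  apply: (is_series_ext _ _ _ _ (@is_series_binomial_column_scaled j _ absx_lt1)) => m.
  rewrite /c Rabs_mult RPow_abs (Rabs_pos_eq (_ / _)) //.
  by apply: Rdiv_le_0_compat; [apply: pos_INR | apply: INR_fact_gt0].
have abs_summable : ex_series (fun j => (Rabs x / (1 - Rabs x)) ^ j.+1 / INR j.+1`!).
  by eexists; apply: is_series_exp_sub1.
have tail_sum := is_series_triangular c_triangular columns abs_columns abs_summable
  (@is_series_exp_sub1 (x / (1 - x))).
apply: is_series_decr_1; rewrite -/(f_S_coef 0) f_S_coef0 /plus /opp /= Rmult_1_r.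
apply: (is_series_ext _ _ _ _ tail_sum) => m; rewrite -/(f_S_coef m.+1) f_S_coef_succ.
have := sum_n_mult_r (x ^ m.+1) (fun j => INR 'C(m, j) / INR j.+1`!) m.
by rewrite /mult /= => <-.
Qed.

Lemma f_S_coef_bounds m : 1 <= f_S_coef m.+1 <= exp (2 * sqrt (INR m.+1)).
Proof.
rewrite f_S_coef_succ.
have term_ge0 j : 0 <= INR 'C(m, j) / INR j.+1`!.
  by apply: Rdiv_le_0_compat; [apply: pos_INR | apply: INR_fact_gt0].
split.
  by apply: Rle_trans (sum_n_ge_first m term_ge0); rewrite bin0 /=; lra.
set s := sqrt (INR m.+1); have s_ge0 : 0 <= s by apply: sqrt_pos.
have taylor_ge0 j : 0 <= s ^ j / INR j`!.
  by apply: Rdiv_le_0_compat; [apply: pow_le | apply: INR_fact_gt0].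
apply: (Rle_trans _ _ _ (sum_n_m_le _ _ 0 m (fun j => bin_div_fact_succ_le_sqr m j))).
apply: (Rle_trans _ _ _ (sum_n_sqr_le m taylor_ge0)).
have taylor : sum_n (fun j => s ^ j / INR j`!) m <= exp s.
  rewrite (sum_n_ext _ (fun j => s ^ j / INR (Factorial.fact j))) => [|j].
    by have := exp_ge_taylor s m s_ge0; rewrite -sum_n_Reals.
  by rewrite fact_Factorial.
have -> : exp (2 * s) = exp s ^ 2 by rewrite /= Rmult_1_r -exp_plus; congr exp; ring.
by apply: pow_incr; split; [apply: sum_n_nonneg | ].
Qed.

Lemma is_lim_seq_ln_f_S_coef : is_lim_seq (fun m => ln (f_S_coef m.+1) / INR m.+1) 0.
Proof.
apply: is_lim_seq_sqrt_bounded_div => m; have [coef_ge1 coef_le] := f_S_coef_bounds m.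
split; first by rewrite -ln_1; apply: ln_le; lra.
by rewrite -[2 * _]ln_exp; apply: ln_le; lra.
Qed.

Theorem f_S_root_div_lim :
  is_lim_seq (fun n => Rpower (INR (f_S n)) (/ INR n) / INR n) (exp (-1)).
Proof.
apply/is_lim_seq_incr_1.
have exponent_lim := is_lim_seq_plus' _ _ _ _ is_lim_seq_ln_f_S_coef is_lim_seq_ln_fact.
rewrite Rplus_0_l in exponent_lim.
apply: is_lim_seq_ext (is_lim_seq_continuous exp _ _ _ exponent_lim) => [m|]; last first.
  exact: derivable_continuous_pt (derivable_pt_exp _).
have N_gt0 : 0 < INR m.+1 by apply: lt_0_INR; lia.
have [coef_ge1 _] := f_S_coef_bounds m.
have f_eq : INR (f_S m.+1) = f_S_coef m.+1 * INR m.+1`!.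
  by rewrite /f_S_coef; field; apply: Rgt_not_eq; apply: INR_fact_gt0.
rewrite /Rpower f_eq ln_mult; try lra; last exact: INR_fact_gt0.
have inv_exp : / INR m.+1 = exp (- ln (INR m.+1)) by rewrite exp_Ropp exp_ln.
by rewrite [RHS]/Rdiv [X in _ = _ * X]inv_exp -exp_plus; congr exp; field; lra.
Qed.

Theorem proposition5p14 :
  (forall n : nat, leq 1 n -> t_S n = n`!) /\
  (forall x : R, -1 < x < 1 ->
     is_series (fun n : nat => INR (t_S n) / INR (n`!) * x ^ n) (x / (1 - x))) /\
  (forall x : R, -1 < x < 1 ->
     is_series (fun n : nat => INR (f_S n) / INR (n`!) * x ^ n) (exp (x / (1 - x)))) /\
  is_lim_seq (fun n : nat => Rpower (INR (f_S n)) (/ INR n) / INR n) (exp (-1)).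
Proof.
split; first exact: t_S_fact.
split; first exact: t_S_egf.
split; first exact: f_S_egf.
exact: f_S_root_div_lim.
Qed.
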